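(* Let $N\ge 3$, $\Delta\theta^*=2\pi/N$, $P\neq0$, and let $(\theta_k,\omega_k)_{k\ge1}$ be a solution of $$\theta_{k+1}=\theta_k+\Delta\theta^*,\qquad \omega_{k+1}-\omega_k=P\sin\theta_k\left[\frac{1}{\omega_k}+\frac{1}{\omega_{k+1}}\right]\quad(k\ge1)$$ with $\omega_k>0$, $\omega_k^2>|P|$ for all $k$, and $\theta_{k_0}\bmod 2\pi\in\{0,\Delta\theta^*/2\}$ for some $k_0$ (so it is $N$-periodic). Then this periodic orbit is stable but not attractive, in the following sense. Fix an index $k_1$ and $\varepsilon\neq 0$, and let $(\omega'_k)_{k\ge1}$ be a positive sequence with $\omega'_{k_1}=\omega_{k_1}+\varepsilon$ satisfying the same recurrence with the same $(\theta_k)$ and $(\omega'_k)^2>|P|$ for all $k$. Then $(\theta_k,\omega'_k)$ is again $N$-periodic, $\omega'_k\neq\omega_k$ for every $k$ (so the perturbed solution does not converge to the original periodic orbit), and $\sup_k|\omega'_k-\omega_k|\to 0$ as $\varepsilon\to 0$.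
   Context: This is the ''discrete zero dynamics'' of a devil-stick with $\phi=\pm\pi/2$; in the paper $P=\pm\frac{g(\Delta\theta^* )^2}{2R\sin(\Delta\theta^* )}$ with constants $g,R>0$. The condition $\omega_k^2>|P|$ for all $k$ is the paper's Assumption 1. *)

(* concrete reals R. Sequences are indexed by nat; only k >= 1 is used. *)
From Stdlib Require Export Reals.
Open Scope R_scope.

Definition dtheta (N : nat) : R := 2 * PI / INR N.

Definition zd_rec (P : R) (theta omega : nat -> R) : Prop :=
  forall k : nat, (1 <= k)%nat ->
    omega (S k) - omega k = P * sin (theta k) * (1 / omega k + 1 / omega (S k)).

Definition admissible (P : R) (omega : nat -> R) : Prop :=
  forall k : nat, (1 <= k)%nat -> 0 < omega k /\ Rabs P < omega k ^ 2.

Definition perturbed (P : R) (theta omega : nat -> R) (k1 : nat) (eps : R)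
  (omega' : nat -> R) : Prop :=
  omega' k1 = omega k1 + eps /\ zd_rec P theta omega' /\ admissible P omega'.

Definition periodic_from1 (N : nat) (u : nat -> R) : Prop :=
  forall k : nat, (1 <= k)%nat -> u (k + N)%nat = u k.

From Stdlib Require Import Reals ZArith Lra Lia Psatz.
Open Scope R_scope.

(* Two solutions [w, w'] of one step of the recurrence satisfy
     (w'_{k+1} - w_{k+1}) (w_{k+1} w'_{k+1} + a) w_k w'_k
       = (w'_k - w_k) (w_k w'_k - a) w_{k+1} w'_{k+1},   a = P sin theta_k,
   and under Assumption 1 both brackets are positive.  Hence two solutions agreeing at one
   index agree everywhere, and their difference grows by a factor depending only on [w]
   at each step.  If theta_{k0} is 0 or Delta theta^*/2 mod 2 pi, then [sin theta] is odd
   about the centres k0 + (t N - e)/2; since stepping backwards flips the sign of the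
   coefficient, every solution is even about shifted centres, and two consecutive
   reflections compose to the shift by N.  For the perturbed solution this gives
   periodicity, nonvanishing of the difference, and a bound C |eps| on one period. *)

Definition zd_step (a x y : R) : Prop := y - x = a * (1 / x + 1 / y).

Lemma zd_step_flip a x y : zd_step a x y -> zd_step (- a) y x.
Proof. unfold zd_step; lra. Qed.

Lemma zd_step_diff a x x' y y' : x <> 0 -> x' <> 0 -> y <> 0 -> y' <> 0 ->
  zd_step a x y -> zd_step a x' y' ->
  (y' - y) * (y * y' + a) * (x * x') = (x' - x) * (x * x' - a) * (y * y').
Proof.
  unfold zd_step; intros.
  transitivity ((y' - y + a * (1 / y - 1 / y')) * (x * x' * (y * y'))); [field; auto|].
  transitivity ((x' - x - a * (1 / x - 1 / x')) * (x * x' * (y * y'))); [|field; auto].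
  f_equal; lra.
Qed.

Lemma Rlt_mul_of_lt_sqr p x y : 0 < x -> 0 < y -> p < x ^ 2 -> p < y ^ 2 -> p < x * y.
Proof. intros; destruct (Rle_dec x y); nra. Qed.

Lemma sqrt_lt_of_lt_sqr p y : 0 <= p -> 0 < y -> p < y ^ 2 -> sqrt p < y.
Proof. intros; rewrite <- (sqrt_pow2 y) by lra; apply sqrt_lt_1_alt; lra. Qed.

Definition growth (p y : R) : R := 2 * y / (y - sqrt p).

Lemma growth_ge1 p y : 0 <= p -> 0 < y -> p < y ^ 2 -> 1 <= growth p y.
Proof.
  intros p_ge0 y_gt0 hy; pose proof (sqrt_lt_of_lt_sqr p y p_ge0 y_gt0 hy); pose proof (sqrt_pos p).
  unfold growth, Rdiv; apply (Rmult_le_reg_r (y - sqrt p)); [lra|].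
  rewrite Rmult_assoc, Rinv_l by lra; lra.
Qed.

Section TwoSteps.

Variables a p x x' y y' : R.
Hypotheses (hx : 0 < x /\ p < x ^ 2) (hx' : 0 < x' /\ p < x' ^ 2)
  (hy : 0 < y /\ p < y ^ 2) (hy' : 0 < y' /\ p < y' ^ 2).
Hypotheses (ha : Rabs a <= p) (hxy : zd_step a x y) (hxy' : zd_step a x' y').

Let a_bounds : - p <= a <= p.
Proof. revert ha; unfold Rabs; destruct (Rcase_abs a); lra. Qed.

Let xx'_gt : p < x * x'.
Proof. apply Rlt_mul_of_lt_sqr; tauto. Qed.

Let yy'_gt : p < y * y'.
Proof. apply Rlt_mul_of_lt_sqr; tauto. Qed.

Let diff : (y' - y) * (y * y' + a) * (x * x') = (x' - x) * (x * x' - a) * (y * y').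
Proof. apply zd_step_diff; auto; lra. Qed.

Lemma zd_step_eq_iff : x = x' <-> y = y'.
Proof.
  pose proof diff as E; pose proof a_bounds; pose proof xx'_gt; pose proof yy'_gt.
  split; intros <-; rewrite Rminus_diag, ?Rmult_0_l in E.
  - assert (0 < (y * y' + a) * (x * x)) by (apply Rmult_lt_0_compat; nra).
    rewrite Rmult_assoc in E; apply Rmult_integral in E; destruct E; nra.
  - assert (0 < (x * x' - a) * (y * y)) by (apply Rmult_lt_0_compat; nra).
    rewrite Rmult_assoc in E; symmetry in E; apply Rmult_integral in E; destruct E; nra.
Qed.

(* Since [y' > sqrt p], [y * y' + a >= y * y' - p >= y' * (y - sqrt p)]. *)
Lemma zd_step_diff_bound : Rabs (y' - y) * (y - sqrt p) <= 2 * y * Rabs (x' - x).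
Proof.
  pose proof a_bounds as [ha1 ha2]; pose proof xx'_gt; pose proof yy'_gt.
  assert (p_ge0 : 0 <= p) by lra.
  set (q := sqrt p).
  assert (q_ge0 : 0 <= q) by apply sqrt_pos.
  assert (qq : q * q = p) by (apply sqrt_sqrt, p_ge0).
  assert (q_lt_y : q < y) by (apply sqrt_lt_of_lt_sqr; tauto).
  assert (q_le_y' : q <= y') by nra.
  assert (E : Rabs (y' - y) * (y * y' + a) * (x * x') = Rabs (x' - x) * (x * x' - a) * (y * y')).
  { pose proof (f_equal Rabs diff) as E; rewrite !Rabs_mult in E.
    rewrite (Rabs_pos_eq (y * y' + a)), (Rabs_pos_eq (x * x' - a)),
      (Rabs_pos_eq x), (Rabs_pos_eq x'), (Rabs_pos_eq y), (Rabs_pos_eq y') in E by nra.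
    exact E. }
  apply (Rmult_le_reg_r (y' * (x * x'))); [nra|].
  pose proof (Rabs_pos (y' - y)); pose proof (Rabs_pos (x' - x)).
  apply Rle_trans with (Rabs (y' - y) * (y * y' + a) * (x * x')).
  { rewrite <- Rmult_assoc; apply Rmult_le_compat_r; [nra|].
    rewrite Rmult_assoc; apply Rmult_le_compat_l; nra. }
  rewrite E; replace (2 * y * Rabs (x' - x) * (y' * (x * x')))
    with (Rabs (x' - x) * (2 * (x * x')) * (y * y')) by ring.
  apply Rmult_le_compat_r; [nra|]; apply Rmult_le_compat_l; lra.
Qed.

End TwoSteps.

Lemma sin_eq_opp_of_add x y (K : Z) : x + y = 2 * PI * IZR K -> sin x = - sin y.
Proof.
  intros Hxy.
  set (u := IZR K * PI); set (v := (x - y) / 2).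
  assert (Hx : x = u + v) by (unfold u, v; lra).
  assert (Hy : y = u - v) by (unfold u, v; lra).
  rewrite Hx, Hy, sin_plus, sin_minus, (sin_eq_0_1 u) by (exists K; reflexivity).
  ring.
Qed.

Lemma Rabs_mult_sin_le c t : Rabs (c * sin t) <= Rabs c.
Proof.
  rewrite Rabs_mult; rewrite <- (Rmult_1_r (Rabs c)) at 2.
  apply Rmult_le_compat_l; [apply Rabs_pos|].
  apply Rabs_le, SIN_bound.
Qed.

Lemma arith_prog_closed (u : nat -> R) D :
  (forall k, (1 <= k)%nat -> u (S k) = u k + D) ->
  forall k, (1 <= k)%nat -> u k = u 1%nat + (INR k - 1) * D.
Proof.
  intros Hu k hk; induction k as [|k IH]; [lia|].
  destruct (Nat.eq_dec k 0) as [->|nz]; [simpl; ring|].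
  rewrite Hu, IH, S_INR by lia; ring.
Qed.

Section ThetaProgression.

Variables (N : nat) (theta : nat -> R).
Hypotheses (N_gt0 : (0 < N)%nat)
  (Htheta : forall k, (1 <= k)%nat -> theta (S k) = theta k + dtheta N).

Let INR_N_neq0 : INR N <> 0.
Proof. apply not_0_INR; lia. Qed.

Lemma theta_add_period k : (1 <= k)%nat -> theta (k + N)%nat = theta k + 2 * PI.
Proof.
  intros hk.
  rewrite (arith_prog_closed _ _ Htheta (k + N)), (arith_prog_closed _ _ Htheta k), plus_INR
    by lia.
  unfold dtheta; field; exact INR_N_neq0.
Qed.

Lemma sin_theta_reflect k0 e (m : Z) t a b :
  (1 <= k0)%nat -> theta k0 = INR e * (dtheta N / 2) + 2 * PI * IZR m ->
  (1 <= a)%nat -> (1 <= b)%nat -> (a + b + e = 2 * k0 + t * N)%nat ->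
  sin (theta a) = - sin (theta b).
Proof.
  intros hk0 Hk0 ha hb Hab.
  apply (sin_eq_opp_of_add _ _ (2 * m + Z.of_nat t)).
  assert (Hsum : INR a + INR b + INR e - 2 * INR k0 - INR t * INR N = 0).
  { apply (f_equal INR) in Hab; rewrite !plus_INR, !mult_INR in Hab; simpl in Hab; lra. }
  assert (HND : INR N * dtheta N - 2 * PI = 0) by (unfold dtheta; field; exact INR_N_neq0).
  rewrite (arith_prog_closed _ _ Htheta a), (arith_prog_closed _ _ Htheta b) by lia.
  rewrite (arith_prog_closed _ _ Htheta k0) in Hk0 by lia.
  rewrite plus_IZR, mult_IZR, <- INR_IZR_INZ.
  apply Rminus_diag_uniq.
  replace (theta 1%nat) with (INR e * (dtheta N / 2) + 2 * PI * IZR m - (INR k0 - 1) * dtheta N)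
    by lra.
  transitivity ((INR a + INR b + INR e - 2 * INR k0 - INR t * INR N) * dtheta N
                + INR t * (INR N * dtheta N - 2 * PI)); [field|].
  rewrite Hsum, HND; ring.
Qed.

End ThetaProgression.

Section Solutions.

Variables (P : R) (theta : nat -> R).

Lemma zd_rec_eq_succ_iff w w' k : zd_rec P theta w -> admissible P w ->
  zd_rec P theta w' -> admissible P w' -> (1 <= k)%nat ->
  w k = w' k <-> w (S k) = w' (S k).
Proof.
  intros Hz Ha Hz' Ha' hk.
  exact (zd_step_eq_iff _ _ _ _ _ _ (Ha k hk) (Ha' k hk) (Ha (S k) (le_S _ _ hk))
    (Ha' (S k) (le_S _ _ hk)) (Rabs_mult_sin_le P (theta k)) (Hz k hk) (Hz' k hk)).
Qed.

Lemma zd_rec_eq_iff w w' j k : zd_rec P theta w -> admissible P w ->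
  zd_rec P theta w' -> admissible P w' -> (1 <= j)%nat -> (1 <= k)%nat ->
  w j = w' j <-> w k = w' k.
Proof.
  intros Hz Ha Hz' Ha'.
  assert (H1 : forall n, (1 <= n)%nat -> w n = w' n <-> w 1%nat = w' 1%nat).
  { intros n hn; induction n as [|n IH]; [lia|].
    destruct (Nat.eq_dec n 0) as [->|nz]; [reflexivity|].
    rewrite <- (zd_rec_eq_succ_iff w w' n) by (auto || lia); apply IH; lia. }
  intros hj hk; rewrite H1, (H1 k); tauto.
Qed.

Lemma zd_rec_reflect w (s : nat) : zd_rec P theta w -> admissible P w ->
  (forall a b, (1 <= a)%nat -> (1 <= b)%nat -> (a + b + 1 = s)%nat ->
     sin (theta a) = - sin (theta b)) ->
  forall a b, (1 <= a)%nat -> (1 <= b)%nat -> (a + b = s)%nat -> w a = w b.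
Proof.
  intros Hz Ha Hsin.
  assert (Hd : forall d a, (1 <= a)%nat -> (a + (a + d) = s)%nat -> w a = w (a + d)%nat).
  { induction d as [d IH] using lt_wf_ind; intros a ha Hs.
    destruct d as [|[|d]].
    - now rewrite Nat.add_0_r.
    - assert (sin0 : sin (theta a) = 0) by (pose proof (Hsin a a ha ha ltac:(lia)); lra).
      pose proof (Hz a ha) as Hstep; rewrite sin0, Rmult_0_r, Rmult_0_l in Hstep.
      rewrite Nat.add_1_r; lra.
    - assert (Hmid : w (S a) = w (S a + d)%nat) by (apply IH; lia).
      assert (Hback : zd_step (P * sin (theta (S a + d)%nat)) (w (S a)) (w a)).
      { rewrite <- (Ropp_involutive (sin _)), <- (Hsin a (S a + d)%nat) by lia.
        rewrite Ropp_mult_distr_r_reverse; apply zd_step_flip, (Hz a ha). }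
      replace (a + S (S d))%nat with (S (S a + d)) by lia.
      apply (zd_step_eq_iff _ _ _ _ _ _ (Ha (S a) ltac:(lia)) (Ha (S a + d)%nat ltac:(lia))
        (Ha a ha) (Ha (S (S a + d)) ltac:(lia)) (Rabs_mult_sin_le _ _)
        Hback (Hz (S a + d)%nat ltac:(lia))).
      exact Hmid. }
  intros a b ha hb Hs; destruct (Nat.le_ge_cases a b) as [hab|hab].
  - replace b with (a + (b - a))%nat by lia; apply Hd; lia.
  - symmetry; replace a with (b + (a - b))%nat by lia; apply Hd; lia.
Qed.

End Solutions.

Lemma zd_rec_periodic N P theta w k0 e (m : Z) : (0 < N)%nat ->
  (forall k, (1 <= k)%nat -> theta (S k) = theta k + dtheta N) ->
  zd_rec P theta w -> admissible P w ->
  (1 <= k0)%nat -> (e <= 1)%nat -> theta k0 = INR e * (dtheta N / 2) + 2 * PI * IZR m ->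
  periodic_from1 N w.
Proof.
  intros hN Htheta Hz Ha hk0 he Hk0.
  assert (Hrefl : forall t a b, (1 <= a)%nat -> (1 <= b)%nat ->
            (a + b + e = 2 * k0 + t * N + 1)%nat -> w a = w b).
  { intros t a b ha hb Hab.
    apply (zd_rec_reflect P theta w (2 * k0 + t * N + 1 - e)); auto; [|lia].
    intros a' b' ha' hb' Hs.
    apply (sin_theta_reflect N theta hN Htheta k0 e m t); auto; lia. }
  (* The reflections with [t = k] and [t = k + 1] compose to the shift by [N]. *)
  intros k hk.
  assert (k <= k * N)%nat by nia.
  assert (S k * N = k * N + N)%nat by lia.
  rewrite (Hrefl (S k) (k + N)%nat (2 * k0 + k * N + 1 - e - k)%nat),
    (Hrefl k k (2 * k0 + k * N + 1 - e - k)%nat); [reflexivity|lia ..].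
Qed.

Lemma periodic_from1_mul N (u : nat -> R) : periodic_from1 N u ->
  forall m k, (1 <= k)%nat -> u (k + m * N)%nat = u k.
Proof.
  intros Hu m; induction m as [|m IH]; intros k hk; [now rewrite Nat.add_0_r|].
  replace (k + S m * N)%nat with (k + m * N + N)%nat by lia.
  rewrite Hu by lia; apply IH, hk.
Qed.

Lemma periodic_from1_window N (u : nat -> R) k1 : (0 < N)%nat -> periodic_from1 N u ->
  (1 <= k1)%nat -> forall k, (1 <= k)%nat -> exists n, (n < N)%nat /\ u k = u (k1 + n)%nat.
Proof.
  intros hN Hu hk1 k hk.
  set (r := (k + k1 * N - k1)%nat).
  exists (r mod N); split; [apply Nat.mod_upper_bound; lia|].
  rewrite <- (periodic_from1_mul N u Hu k1 k hk),
    <- (periodic_from1_mul N u Hu (r / N) (k1 + r mod N)) by lia.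
  f_equal; pose proof (Nat.div_mod_eq r N); assert (k1 <= k1 * N)%nat by nia; lia.
Qed.

Section Perturbation.

Variables (P : R) (theta w : nat -> R).
Hypotheses (Hz : zd_rec P theta w) (Ha : admissible P w).

Lemma zd_rec_diff_succ w' k : zd_rec P theta w' -> admissible P w' -> (1 <= k)%nat ->
  Rabs (w' (S k) - w (S k)) <= growth (Rabs P) (w (S k)) * Rabs (w' k - w k).
Proof.
  intros Hz' Ha' hk.
  pose proof (zd_step_diff_bound _ _ _ _ _ _ (Ha k hk) (Ha' k hk) (Ha (S k) (le_S _ _ hk))
    (Ha' (S k) (le_S _ _ hk)) (Rabs_mult_sin_le P (theta k)) (Hz k hk) (Hz' k hk)) as B.
  destruct (Ha (S k) (le_S _ _ hk)) as [y_gt0 y_sqr].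
  pose proof (sqrt_lt_of_lt_sqr _ _ (Rabs_pos P) y_gt0 y_sqr).
  apply (Rmult_le_reg_r (w (S k) - sqrt (Rabs P))); [lra|].
  unfold growth; replace (_ * Rabs (w' k - w k) * _) with (2 * w (S k) * Rabs (w' k - w k))
    by (field; lra).
  exact B.
Qed.

Lemma zd_rec_diff_window k1 : (1 <= k1)%nat -> forall B, exists C, 0 < C /\
  forall w', zd_rec P theta w' -> admissible P w' ->
  forall n, (n <= B)%nat -> Rabs (w' (k1 + n)%nat - w (k1 + n)%nat) <= C * Rabs (w' k1 - w k1).
Proof.
  intros hk1 B; induction B as [|B [C [C_pos HC]]].
  - exists 1; split; [lra|]; intros w' _ _ n hn.
    replace n with 0%nat by lia; rewrite Nat.add_0_r; lra.
  - set (L := growth (Rabs P) (w (k1 + S B)%nat)).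
    assert (L_ge1 : 1 <= L)
      by (destruct (Ha (k1 + S B)%nat ltac:(lia)); apply growth_ge1; auto using Rabs_pos).
    exists (C * L); split; [nra|]; intros w' Hz' Ha' n hn.
    pose proof (Rabs_pos (w' k1 - w k1)).
    destruct (Nat.eq_dec n (S B)) as [->|nB].
    + rewrite Nat.add_succ_r.
      eapply Rle_trans; [apply zd_rec_diff_succ; auto; lia|].
      rewrite <- Nat.add_succ_r; fold L.
      rewrite (Rmult_comm C L), Rmult_assoc.
      apply Rmult_le_compat_l; [lra|]; apply HC; auto.
    + apply Rle_trans with (C * Rabs (w' k1 - w k1)); [apply HC; auto; lia|].
      rewrite (Rmult_comm C L), Rmult_assoc, <- (Rmult_1_l (C * _)) at 1.
      apply Rmult_le_compat_r; nra.
Qed.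

Lemma zd_rec_diff_bound N k1 : (0 < N)%nat -> (1 <= k1)%nat -> periodic_from1 N w ->
  exists C, 0 < C /\ forall w', zd_rec P theta w' -> admissible P w' -> periodic_from1 N w' ->
  forall k, (1 <= k)%nat -> Rabs (w' k - w k) <= C * Rabs (w' k1 - w k1).
Proof.
  intros hN hk1 Hw.
  destruct (zd_rec_diff_window k1 hk1 N) as [C [C_pos HC]].
  exists C; split; [exact C_pos|]; intros w' Hz' Ha' Hw' k hk.
  assert (Hdiff : periodic_from1 N (fun j => w' j - w j))
    by (intros j hj; rewrite Hw, Hw' by exact hj; reflexivity).
  destruct (periodic_from1_window N _ k1 hN Hdiff hk1 k hk) as [n [hn ->]].
  apply HC; auto; lia.
Qed.

End Perturbation.

Theorem corollary1 (N : nat) (P : R) (theta omega : nat -> R) (k0 k1 : nat) :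
  (3 <= N)%nat ->
  P <> 0 ->
  (forall k : nat, (1 <= k)%nat -> theta (S k) = theta k + dtheta N) ->
  zd_rec P theta omega ->
  admissible P omega ->
  (1 <= k0)%nat ->
  (exists m : Z, theta k0 = 2 * PI * IZR m \/ theta k0 = dtheta N / 2 + 2 * PI * IZR m) ->
  (1 <= k1)%nat ->
  (* the original orbit is N-periodic *)
  (forall k : nat, (1 <= k)%nat -> theta (k + N)%nat = theta k + 2 * PI) /\
  periodic_from1 N omega /\
  (* every perturbed solution is N-periodic and never coincides with omega *)
  (forall (eps : R) (omega' : nat -> R), eps <> 0 ->
     perturbed P theta omega k1 eps omega' ->
     periodic_from1 N omega' /\ (forall k : nat, (1 <= k)%nat -> omega' k <> omega k)) /\
  (* sup_k |omega'_k - omega_k| -> 0 as eps -> 0 *)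
  (forall eta : R, 0 < eta -> exists delta : R, 0 < delta /\
     forall (eps : R) (omega' : nat -> R), eps <> 0 -> Rabs eps < delta ->
       perturbed P theta omega k1 eps omega' ->
       forall k : nat, (1 <= k)%nat -> Rabs (omega' k - omega k) <= eta).
Proof.
  intros hN _ Htheta Hz Ha hk0 [m Hk0] hk1.
  assert (N_gt0 : (0 < N)%nat) by lia.
  assert (Hper : forall w, zd_rec P theta w -> admissible P w -> periodic_from1 N w).
  { intros w Hzw Haw; destruct Hk0 as [Hk0|Hk0];
      [apply (zd_rec_periodic N P theta w k0 0 m)|apply (zd_rec_periodic N P theta w k0 1 m)];
      auto; rewrite Hk0; simpl; ring. }
  split; [exact (theta_add_period N theta N_gt0 Htheta)|].
  split; [exact (Hper omega Hz Ha)|].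
  split.
  - intros eps omega' eps_neq0 [Hk1 [Hz' Ha']]; split; [exact (Hper omega' Hz' Ha')|].
    intros k hk Heq; apply eps_neq0.
    apply (zd_rec_eq_iff P theta omega' omega k k1) in Heq; auto; lra.
  - destruct (zd_rec_diff_bound P theta omega Hz Ha N k1 N_gt0 hk1 (Hper omega Hz Ha))
      as [C [C_pos HC]].
    intros eta eta_gt0; exists (eta / C); split; [apply Rdiv_lt_0_compat; lra|].
    intros eps omega' _ Heps [Hk1 [Hz' Ha']] k hk.
    eapply Rle_trans; [apply HC; auto|].
    rewrite Hk1; replace (omega k1 + eps - omega k1) with eps by ring.
    apply Rlt_le; replace eta with (C * (eta / C)) by (field; lra).
    apply Rmult_lt_compat_l; lra.
Qed.
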